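(* Let $H$ be an abelian group with an alternating $\mathbb{Z}$-bilinear form $\langle-,-\rangle$, and let $z\in\ker\mu$. Then the kernel of the composition \[ Z_2(\mathbb{Q}[H^{(1)}])_{(z)}\longrightarrow C_2(\mathbb{Q}[H])_{(z)}\longrightarrow \hat C_2(\mathbb{Q}[H])_{(z)}, \] where the first map is induced by the inclusion $\mathbb{Q}[H^{(1)}]\hookrightarrow\mathbb{Q}[H]$ and the second is the quotient projection, equals $B_2(\mathbb{Q}[H^{(1)}])_{(z)}$.
   Context: $\mu:H\to\mathrm{Hom}_{\mathbb{Z}}(H,\mathbb{Z})$, $\mu(x)(y)=\langle x,y\rangle$; $H^{(1)}:=H\setminus\ker\mu$. $\mathbb{Q}[S]$ ($S\subset H$) is the $\mathbb{Q}$-vector space with basis symbols $[x]$, $x\in S$; $\mathbb{Q}[H]$ is a Lie algebra via $[[x],[y]]=\langle x,y\rangle[x+y]$ and $\mathbb{Q}[H^{(1)}]$ is a Lie subalgebra. Chevalley–Eilenberg chains: $C_p(\mathfrak g)=\bigwedge^p_{\mathbb{Q}}\mathfrak g$, $\partial(x_1\wedge\cdots\wedge x_p)=\sum_{i<j}(-1)^{i+j}[x_i,x_j]\wedge x_1\wedge\cdots\widehat{x_i}\cdots\widehat{x_j}\cdots\wedge x_p$. For $S\in\{H,H^{(1)}\}$, $p>0$, $w\in H$, $C_p(\mathbb{Q}[S])_{(w)}$ is the span of $[u_1]\wedge\cdots\wedge[u_p]$ with $u_i\in S$, $\sum u_i=w$; this is a subcomplex, with cycles $Z_p(\mathbb{Q}[S])_{(w)}$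 and boundaries $B_p(\mathbb{Q}[S])_{(w)}$ (boundaries of elements of $C_{p+1}(\mathbb{Q}[S])_{(w)}$). $\hat I$ is the ideal of $\bigwedge\mathbb{Q}[H]$ generated by all $[u+v]\wedge[x]-[u]\wedge[x+v]-[v]\wedge[x+u]$, $u,v,x\in H$; $\hat C_2(\mathbb{Q}[H])_{(w)}=C_2(\mathbb{Q}[H])_{(w)}/(\hat I\cap C_2(\mathbb{Q}[H])_{(w)})$. *)

From HB Require Import structures.
From mathcomp Require Import all_boot all_order all_algebra.
From mathcomp Require Import finmap.
From mathcomp.multinomials Require Import monalg.
Set Implicit Arguments. Unset Strict Implicit. Unset Printing Implicit Defensive.
Import GRing.Theory Num.Theory.
Local Open Scope ring_scope.

Definition alt_bilinear (H : zmodType) (form : H -> H -> int) : Prop :=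
  [/\ forall x y z, form (x + y) z = form x z + form y z,
      forall x y z, form x (y + z) = form x y + form x z
    & forall x, form x x = 0].

Definition in_kermu (H : zmodType) (form : H -> H -> int) (x : H) : Prop :=
  forall y, form x y = 0.
Definition H1 (H : zmodType) (form : H -> H -> int) (x : H) : Prop :=
  ~ in_kermu form x.
Definition allH (H : zmodType) (x : H) : Prop := True.

(* The tensor algebra T(Q[H]) : Q-vector space with basis the words in H;
   the word [:: x1; ...; xp] stands for [x1] (x) ... (x) [xp]. *)
Definition Tens (H : zmodType) := {malg rat[seq H]}.

Section Tensor.
Variable H : zmodType.
Variable form : H -> H -> int.

Definition tmul (u v : Tens H) : Tens H :=
  \sum_(k <- enum_fset (msupp u)) \sum_(l <- enum_fset (msupp v))
     (u@_k * v@_l) *: << k ++ l >>.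

Definition word_in (S : H -> Prop) (k : seq H) : Prop := forall x, x \in k -> S x.

(* u lies in the span of the words of length p, letters in S, letter-sum w.
   With p > 0 this is (a lift of) C_p(Q[S])_(w). *)
Definition inC (p : nat) (S : H -> Prop) (w : H) (u : Tens H) : Prop :=
  forall k, k \in msupp u ->
    [/\ size k = p, word_in S k & \sum_(x <- k) x = w].

Definition inT (S : H -> Prop) (u : Tens H) : Prop :=
  forall k, k \in msupp u -> word_in S k.

Inductive tideal (S : H -> Prop) (G : Tens H -> Prop) : Tens H -> Prop :=
| tideal_gen g : G g -> tideal S G g
| tideal0 : tideal S G 0
| tidealD u v : tideal S G u -> tideal S G v -> tideal S G (u + v)
| tidealZ (a : rat) u : tideal S G u -> tideal S G (a *: u)
| tidealMl a u : inT S a -> tideal S G u -> tideal S G (tmul a u)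
| tidealMr a u : inT S a -> tideal S G u -> tideal S G (tmul u a).

Definition inQ (S : H -> Prop) (v : Tens H) : Prop :=
  forall k, k \in msupp v -> size k = 1%N /\ word_in S k.

(* generators  v (x) v,  v \in Q[S],  of the ideal defining the exterior
   algebra  /\ Q[S] = T(Q[S]) / < v (x) v > *)
Definition ext_rel (S : H -> Prop) (g : Tens H) : Prop :=
  exists v, inQ S v /\ g = tmul v v.

(* the lifts to T(Q[H]) of the generators of the ideal I^ :
   [u+v] /\ [x] - [u] /\ [x+v] - [v] /\ [x+u] *)
Definition ihat_gen (g : Tens H) : Prop :=
  exists u v x : H,
    g = << [:: u + v; x] >> - << [:: u; x + v] >> - << [:: v; x + u] >>.

(* Chevalley--Eilenberg boundary on a word x_1 ... x_p (0-based indices;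
   (-1)^(i+j) has the same parity as for 1-based indices):
   sum_{i<j} (-1)^(i+j) <x_i,x_j> [x_i+x_j] x_1 .. ^x_i .. ^x_j .. x_p,
   using the bracket [[x],[y]] = <x,y>[x+y]. *)
Definition drop2 (k : seq H) (i j : nat) : seq H :=
  [seq nth 0 k l | l <- iota 0 (size k) & (l != i) && (l != j)].

Definition bdw (k : seq H) : Tens H :=
  \sum_(i < size k) \sum_(j < size k | (i < j)%N)
    ((-1) ^+ (i + j) * (form (nth 0 k i) (nth 0 k j))%:~R) *:
      << (nth 0 k i + nth 0 k j) :: drop2 k i j >>.

Definition bd (u : Tens H) : Tens H :=
  \sum_(k <- enum_fset (msupp u)) u@_k *: bdw k.
End Tensor.

(* Since z lies in ker mu, every 2-chain of weight z is a cycle, and the boundary of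
   [a] /\ [b] /\ [c] (a + b + c = z) is a multiple of
   [a+b] /\ [c] + [a+c] /\ [b] + [b+c] /\ [a], which lies in I^; this gives one
   inclusion.  Conversely, modulo boundaries the map a |-> [a] /\ [z-a] is additive
   on H^(1): when <a,b> <> 0 the defect is the boundary of [a] /\ [b] /\ [z-a-b],
   and otherwise one passes through an auxiliary element pairing nontrivially with
   a, b and a + b.  It therefore extends to a homomorphism g from H to 2-chains
   modulo boundaries, with g x + g (z - x) = 0.  The linear map sending
   [x] (x) [y] to g x when x + y = z (and every other word to 0) kills the exterior
   relations and the generators of I^, and it is the identity on
   C_2(Q[H^(1)])_(z); hence every element of the kernel is a boundary. *)

From HB Require Import structures.
From mathcomp Require Import all_boot all_order all_algebra.
From mathcomp Require Import finmap.
From mathcomp.multinomials Require Import monalg.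
From mathcomp Require Import zify.
From Stdlib Require Import Setoid Morphisms Classical ClassicalEpsilon.
Import GRing.Theory Num.Theory.
Set Implicit Arguments. Unset Strict Implicit. Unset Printing Implicit Defensive.
Local Open Scope ring_scope.

Section LinearExtension.
Variable H : zmodType.
Implicit Types (u v : Tens H) (f g : seq H -> Tens H) (k l : seq H).

Definition linext f u : Tens H := \sum_(k <- msupp u) u@_k *: f k.

Lemma linextEw f (D : {fset seq H}) u : (msupp u `<=` D)%fset ->
  linext f u = \sum_(k <- D) u@_k *: f k.
Proof. by move=> sub; apply: big_fset_incl => // k _ /mcoeff_outdom ->; rewrite scale0r. Qed.

Lemma linext_is_linear f : linear (linext f).
Proof.
move=> a u v; pose D := (msupp u `|` msupp v)%fset.
have sD : (msupp (a *: u + v) `<=` D)%fset.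
  by apply: fsubset_trans (msuppD_le _ _) _; rewrite fsetSU ?msuppZ_le.
rewrite (linextEw _ sD) (linextEw _ (fsubsetUl _ _ : msupp u `<=` D)%fset).
rewrite (linextEw _ (fsubsetUr _ _ : msupp v `<=` D)%fset) scaler_sumr -big_split.
by apply: eq_bigr => k _; rewrite mcoeffD mcoeffZ scalerDl scalerA.
Qed.

HB.instance Definition _ f :=
  GRing.isLinear.Build rat (Tens H) (Tens H) *:%R (linext f) (linext_is_linear f).

Lemma linextU f k : linext f << k >> = f k.
Proof. by rewrite /linext msuppU oner_eq0 big_seq_fset1 mcoeffUU scale1r. Qed.

Lemma eq_linext f g u : {in msupp u, f =1 g} -> linext f u = linext g u.
Proof. by move=> fg; rewrite /linext !big_seq; apply: eq_bigr => k /fg ->. Qed.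

Lemma linext_id u : linext (fun k => << k >>) u = u.
Proof.
rewrite [RHS]monalgE; apply: eq_bigr => k _.
by apply/malgP => l; rewrite mcoeffZ !mcoeffU mulr_natr.
Qed.

Lemma linext0f u : linext (fun=> 0) u = 0.
Proof. by rewrite /linext big1 // => k _; rewrite scaler0. Qed.

Lemma linextDf f g u : linext (fun k => f k + g k) u = linext f u + linext g u.
Proof. by rewrite /linext -big_split; apply: eq_bigr => k _; rewrite scalerDr. Qed.

Lemma linext_comp f g u : linext f (linext g u) = linext (fun k => linext f (g k)) u.
Proof. by rewrite linear_sum; apply: eq_bigr => k _; rewrite linearZ. Qed.

Lemma linext_swap (F : seq H -> seq H -> Tens H) u v :
  linext (fun k => linext (F k) v) u = linext (fun l => linext (F^~ l) u) v.
Proof.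
rewrite /linext; under eq_bigr do rewrite scaler_sumr.
rewrite exchange_big /=; apply: eq_bigr => l _; rewrite scaler_sumr.
by apply: eq_bigr => k _; rewrite !scalerA mulrC.
Qed.

Lemma linext_ind (Q : Tens H -> Prop) f u :
  Q 0 -> (forall x y, Q x -> Q y -> Q (x + y)) -> (forall a x, Q x -> Q (a *: x)) ->
  {in msupp u, forall k, Q (f k)} -> Q (linext f u).
Proof. by move=> Q0 QD QZ Qf; rewrite /linext big_seq; apply: big_ind => // k /Qf /QZ. Qed.

Lemma tmulE u v : tmul u v = linext (fun k => linext (fun l => << k ++ l >>) v) u.
Proof.
rewrite /tmul /linext; apply: eq_bigr => k _; rewrite scaler_sumr.
by apply: eq_bigr => l _; rewrite scalerA.
Qed.

Lemma tmulU k l : tmul << k >> << l >> = << k ++ l >>.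
Proof. by rewrite tmulE !linextU. Qed.

Lemma tmulDl u v w : tmul (u + v) w = tmul u w + tmul v w.
Proof. by rewrite !tmulE linearD. Qed.

Lemma tmulDr u v w : tmul u (v + w) = tmul u v + tmul u w.
Proof. by rewrite !tmulE -linextDf; apply: eq_linext => k _; rewrite linearD. Qed.

Lemma linext_tmul f u v :
  linext f (tmul u v) = linext (fun k => linext (fun l => f (k ++ l)) v) u.
Proof.
rewrite tmulE linext_comp; apply: eq_linext => k _.
by rewrite linext_comp; apply: eq_linext => l _; rewrite linextU.
Qed.

End LinearExtension.

Section Supports.
Variable H : zmodType.
Implicit Types (P : seq H -> Prop) (u v : Tens H).

Definition all_words P u := forall k, k \in msupp u -> P k.

Lemma all_words0 P : all_words P 0.
Proof. by move=> k; rewrite msupp0 inE. Qed.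

Lemma all_wordsD P u v : all_words P u -> all_words P v -> all_words P (u + v).
Proof. by move=> Pu Pv k /(fsubsetP (msuppD_le u v)); rewrite inE => /orP[/Pu|/Pv]. Qed.

Lemma all_wordsZ P a u : all_words P u -> all_words P (a *: u).
Proof. by move=> Pu k /(fsubsetP (msuppZ_le a u)) /Pu. Qed.

Lemma all_wordsN P u : all_words P u -> all_words P (- u).
Proof. by move=> Pu k; rewrite msuppN => /Pu. Qed.

Lemma all_wordsU P k : P k -> all_words P << k >>.
Proof. by move=> Pk l; rewrite msuppU oner_eq0 inE => /eqP ->. Qed.

Lemma all_words_none P u : (forall k, ~ P k) -> all_words P u -> u = 0.
Proof.
move=> noP Pu; apply/malgP => k; rewrite mcoeff0.
by apply: mcoeff_outdom; apply/negP => /Pu /noP.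
Qed.

Lemma all_words_linext P f u :
  {in msupp u, forall k, all_words P (f k)} -> all_words P (linext f u).
Proof. by apply: linext_ind; [apply: all_words0 | apply: all_wordsD | apply: all_wordsZ]. Qed.

End Supports.

Section Ideals.
Variables (H : zmodType) (S : H -> Prop) (G : Tens H -> Prop).
Implicit Types (u v : Tens H).

Lemma tidealN u : tideal S G u -> tideal S G (- u).
Proof. by rewrite -scaleN1r; apply: tidealZ. Qed.

Lemma tidealB u v : tideal S G u -> tideal S G v -> tideal S G (u - v).
Proof. by move=> Iu Iv; apply/tidealD/tidealN. Qed.

Lemma tideal_linext f u : {in msupp u, forall k, tideal S G (f k)} -> tideal S G (linext f u).
Proof. by apply: linext_ind; [apply: tideal0 | apply: tidealD | apply: tidealZ]. Qed.

Lemma inQU x : S x -> inQ S << [:: x] >>.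
Proof. by move=> Sx; apply: all_wordsU; split => // y; rewrite inE => /eqP ->. Qed.

Hypothesis ext_relG : forall g, ext_rel S g -> G g.

Lemma tideal_sym x y : S x -> S y -> tideal S G (<< [:: x; y] >> + << [:: y; x] >>).
Proof.
move=> Sx Sy; pose sq v := tmul v v.
have Isq v : inQ S v -> tideal S G (sq v) by move=> Qv; apply/tideal_gen/ext_relG; exists v.
have -> : << [:: x; y] >> + << [:: y; x] >> =
    sq (<< [:: x] >> + << [:: y] >>) - sq << [:: x] >> - sq << [:: y] >>.
  rewrite /sq tmulDl !tmulDr !tmulU /=.
  by rewrite addrAC addrA addrK -addrA (addrC <<[:: y; x]>>) addrACA subrr add0r.
apply: tidealB; [apply: tidealB|]; apply: Isq; try exact: inQU.
exact: all_wordsD (inQU Sx) (inQU Sy).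
Qed.

End Ideals.

Lemma tideal_sub (H : zmodType) (S S' : H -> Prop) (G G' : Tens H -> Prop) u :
  (forall x, S x -> S' x) -> (forall g, G g -> G' g) -> tideal S G u -> tideal S' G' u.
Proof.
move=> SS' GG'; have inTS' a : inT S a -> inT S' a by move=> Sa k /Sa Sk x /Sk /SS'.
elim=> {u} [g /GG'||u v _ Iu _ Iv|a u _ Iu|a u /inTS' Sa _ Iu|a u /inTS' Sa _ Iu].
- exact: tideal_gen.
- exact: tideal0.
- exact: tidealD.
- exact: tidealZ.
- exact: tidealMl.
- exact: tidealMr.
Qed.

Lemma tideal_all_words (H : zmodType) (S : H -> Prop) (G : Tens H -> Prop) P u :
  (forall k l, P k -> P (k ++ l)) -> (forall k l, P l -> P (k ++ l)) ->
  (forall g, G g -> all_words P g) -> tideal S G u -> all_words P u.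
Proof.
move=> P_catr P_catl PG; elim=> {u} [g /PG //||u v _ Pu _ Pv|a u _ Pu|a u _ _ Pu|a u _ _ Pu].
- exact: all_words0.
- exact: all_wordsD.
- exact: all_wordsZ.
- rewrite tmulE; apply: all_words_linext => k _; apply: all_words_linext => l /Pu Pl.
  exact: all_wordsU (P_catl _ _ Pl).
- rewrite tmulE; apply: all_words_linext => k /Pu Pk; apply: all_words_linext => l _.
  exact: all_wordsU (P_catr _ _ Pk).
Qed.

(* Two affine functions [m |-> A + A' m] that do not vanish at 0 vanish for at
   most one [m] each, so one of [m = 1, 2, 3] avoids both zeros. *)
Lemma affine_int_avoid (A B A' B' : int) : A != 0 -> B != 0 ->
  exists2 m, (0 < m)%N & (A + A' *+ m != 0) && (B + B' *+ m != 0).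
Proof.
move=> A0 B0.
have [h1|h1] := boolP ((A + A' *+ 1 != 0) && (B + B' *+ 1 != 0)); first by exists 1%N.
have [h2|h2] := boolP ((A + A' *+ 2 != 0) && (B + B' *+ 2 != 0)); first by exists 2%N.
have [h3|h3] := boolP ((A + A' *+ 3 != 0) && (B + B' *+ 3 != 0)); first by exists 3%N.
by exfalso; move: A0 B0 h1 h2 h3; rewrite !mulrS !mulr0n !addr0; lia.
Qed.

Section AlternatingForm.
Variables (H : zmodType) (form : H -> H -> int).
Hypothesis form_alt : alt_bilinear form.
Implicit Types (a b c n s w x y : H).

Lemma altDl x y w : form (x + y) w = form x w + form y w.
Proof. by case: form_alt. Qed.

Lemma altDr x y w : form w (x + y) = form w x + form w y.
Proof. by case: form_alt. Qed.

Lemma altxx x : form x x = 0.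
Proof. by case: form_alt. Qed.

Lemma alt0l w : form 0 w = 0.
Proof. by apply: (@addrI _ (form 0 w)); rewrite -altDl !addr0. Qed.

Lemma altNl x w : form (- x) w = - form x w.
Proof. by apply: (@addrI _ (form x w)); rewrite -altDl !subrr alt0l. Qed.

Lemma alt0r w : form w 0 = 0.
Proof. by apply: (@addrI _ (form w 0)); rewrite -altDr !addr0. Qed.

Lemma altNr x w : form w (- x) = - form w x.
Proof. by apply: (@addrI _ (form w x)); rewrite -altDr !subrr alt0r. Qed.

Lemma altMnl x w m : form (x *+ m) w = form x w *+ m.
Proof. by elim: m => [|m IHm]; rewrite ?mulr0n ?alt0l // !mulrS altDl IHm. Qed.

Lemma altMnr x w m : form w (x *+ m) = form w x *+ m.
Proof. by elim: m => [|m IHm]; rewrite ?mulr0n ?alt0r // !mulrS altDr IHm. Qed.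

Lemma altC x y : form x y = - form y x.
Proof.
apply/eqP; rewrite -addr_eq0; apply/eqP.
by have := altxx (x + y); rewrite altDl !altDr !altxx add0r addr0.
Qed.

Lemma H1_formr a y : form a y != 0 -> H1 form a.
Proof. by move=> /eqP nz Ka; apply/nz/Ka. Qed.

Lemma H1_forml a y : form y a != 0 -> H1 form a.
Proof. by rewrite altC oppr_eq0 => /H1_formr. Qed.

Lemma H1_witness a : H1 form a -> exists y, form a y != 0.
Proof.
move=> Sa; apply: NNPP => none; apply: Sa => y.
by apply: NNPP => /eqP ?; apply: none; exists y.
Qed.

Lemma notH1_kermu n : ~ H1 form n -> in_kermu form n.
Proof. exact: NNPP. Qed.

Lemma H1_addl n s : ~ H1 form n -> H1 form s -> H1 form (n + s).
Proof.
move=> /notH1_kermu Kn /H1_witness[y sy]; apply: (@H1_formr _ y).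
by rewrite altDl Kn add0r.
Qed.

Lemma H1_addr n s : ~ H1 form n -> H1 form s -> H1 form (s + n).
Proof. by rewrite addrC; apply: H1_addl. Qed.

Lemma H1N s : H1 form s -> H1 form (- s).
Proof. by move=> /H1_witness[y sy]; apply: (@H1_formr _ y); rewrite altNl oppr_eq0. Qed.

Lemma H1_mulSn s m : H1 form s -> H1 form (s *+ m.+1).
Proof. by move=> /H1_witness[y sy]; apply: (@H1_formr _ y); rewrite altMnl mulrn_eq0. Qed.

Lemma H1_witness3 a b c : H1 form a -> H1 form b -> H1 form c ->
  exists w, [/\ form a w != 0, form b w != 0 & form c w != 0].
Proof.
move=> /H1_witness[ya ay] /H1_witness[yb y_b] /H1_witness[y cy].
have [w [aw bw]] : exists w, form a w != 0 /\ form b w != 0.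
  have [ba|] := eqVneq (form b ya) 0; last by exists ya.
  have [ab|] := eqVneq (form a yb) 0; last by exists yb.
  by exists (ya + yb); rewrite !altDr ba ab add0r addr0.
have [cw|] := eqVneq (form c w) 0; last by exists w.
have [m m_gt0 /andP[am bm]] := affine_int_avoid (form a y) (form b y) aw bw.
exists (w + y *+ m); rewrite !altDr !altMnr; split => //.
by rewrite cw add0r mulrn_eq0 negb_or -lt0n m_gt0.
Qed.

End AlternatingForm.

(* the ideal of T(Q[H]) whose image in /\ Q[H] is I^ *)
Local Notation hat_ideal H :=
  (tideal (@allH H) (fun g => ext_rel (@allH H) g \/ ihat_gen g)).

Section BoundaryOfShortWords.
Variables (H : zmodType) (form : H -> H -> int).

Lemma bdw2 a b : bdw form [:: a; b] = - (form a b)%:~R *: << [:: a + b] >>.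
Proof.
rewrite /bdw /= !big_ord_recl big_ord0 /=.
do 3! rewrite ?big_mkcond /= ?big_ord_recl ?big_ord0 /= /bump /= /drop2 /=.
move: << [:: a + b] >> => X.
by rewrite !expr1 !addr0 !add0r mulN1r.
Qed.

Lemma bdw3 a b c : bdw form [:: a; b; c] = - (form a b)%:~R *: << [:: a + b; c] >>
  + (form a c)%:~R *: << [:: a + c; b] >> - (form b c)%:~R *: << [:: b + c; a] >>.
Proof.
rewrite /bdw /= !big_ord_recl big_ord0 /=.
do 4! rewrite ?big_mkcond /= ?big_ord_recl ?big_ord0 /= /bump /= /drop2 /=.
rewrite (_ : (0 + (1 + 0))%N = 1%N) // (_ : (0 + (1 + (1 + 0)))%N = 2%N) //.
rewrite (_ : (1 + 0 + (1 + (1 + 0)))%N = 3%N) // expr1 (exprS _ 2).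
rewrite (_ : (-1) ^+ 2 = 1 :> rat) ?mulr1; last by rewrite expr2 mulN1r opprK.
move: << [:: a + b; c] >> << [:: a + c; b] >> << [:: b + c; a] >> => X Y Z.
by rewrite !mulN1r !mul1r !addr0 !add0r !scaleNr.
Qed.

End BoundaryOfShortWords.

Lemma hat_ideal_triple (H : zmodType) (a b c : H) :
  hat_ideal H (<< [:: a + b; c] >> + << [:: a + c; b] >> + << [:: b + c; a] >>).
Proof.
have ext_hat g : ext_rel (@allH H) g -> ext_rel (@allH H) g \/ ihat_gen g by left.
have Ihat : hat_ideal H (<< [:: a + b; c] >> - << [:: a; c + b] >> - << [:: b; c + a] >>).
  by apply: tideal_gen; right; exists a, b, c.
have := tidealD (tidealD Ihat (tideal_sym ext_hat (x := a) (y := c + b) I I))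
  (tideal_sym ext_hat (x := b) (y := c + a) I I).
rewrite (addrC c b) (addrC c a) [_ - _ - _ + _]addrAC subrKA subrKA.
by rewrite addrAC.
Qed.

Lemma hat_ideal_size_gt1 (H : zmodType) (u : Tens H) :
  hat_ideal H u -> all_words (fun k => 1 < size k)%N u.
Proof.
apply: tideal_all_words => [k l|k l|g [[v [Qv ->]]|[x [y [w ->]]]]].
- by rewrite size_cat => /leq_trans; apply; apply: leq_addr.
- by rewrite size_cat => /leq_trans; apply; apply: leq_addl.
- rewrite tmulE; apply: all_words_linext => k /Qv[k1 _].
  by apply: all_words_linext => l /Qv[l1 _]; apply: all_wordsU; rewrite size_cat k1 l1.
- by do 2?apply: all_wordsD; do ?apply: all_wordsN; apply: all_wordsU.
Qed.

Section BoundaryOfChains.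
Variables (H : zmodType) (form : H -> H -> int) (z : H).
Hypotheses (form_alt : alt_bilinear form) (z_kermu : in_kermu form z).
Local Notation altDr := (altDr form_alt).
Local Notation altNr := (altNr form_alt).
Local Notation altxx := (altxx form_alt).
Local Notation altC := (altC form_alt).

Lemma alt_kermur y : form y z = 0.
Proof. by rewrite altC z_kermu oppr0. Qed.

Lemma bd_C2_kermu S c : inC 2 S z c -> bd form c = 0.
Proof.
move=> Cc; rewrite /bd big_seq big1 // => k /Cc[].
case: k => [|x [|y [|]]] //= _ _; rewrite !big_cons big_nil addr0 => sum_z.
have -> : y = z - x by rewrite -sum_z (addrC x y) addrK.
by rewrite bdw2 altDr alt_kermur altNr altxx add0r oppr0 scale0r scaler0.
Qed.

Lemma hat_ideal_bd_C3 S d : inC 3 S z d -> hat_ideal H (bd form d).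
Proof.
move=> Cd; apply: tideal_linext => k /Cd[].
case: k => [|a [|b [|c [|]]]] //= _ _; rewrite !big_cons big_nil addr0 addrA => sum_z.
have fab : form a b = - form a c.
  apply/eqP; rewrite -addr_eq0; apply/eqP.
  by have := alt_kermur a; rewrite -sum_z !altDr altxx add0r.
have fbc : form b c = - form a c.
  apply/eqP; rewrite -addr_eq0; apply/eqP.
  by have := alt_kermur b; rewrite -sum_z !altDr altxx addr0 (altC b a) fab opprK addrC.
rewrite bdw3 fab fbc !mulrNz !opprK -scaleNr opprK -!scalerDr.
exact/tidealZ/hat_ideal_triple.
Qed.

End BoundaryOfChains.

Section BoundariesModuloExterior.
Variables (H : zmodType) (form : H -> H -> int) (z : H).
Hypotheses (form_alt : alt_bilinear form) (z_kermu : in_kermu form z).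
Local Notation S := (H1 form).
Local Notation altDl := (altDl form_alt).
Local Notation altDr := (altDr form_alt).
Local Notation altNr := (altNr form_alt).
Local Notation altxx := (altxx form_alt).
Local Notation altC := (altC form_alt).
Local Notation alt_kermur := (alt_kermur form_alt z_kermu).
Local Notation H1_forml := (H1_forml form_alt).
Local Notation H1_addl := (H1_addl form_alt).
Local Notation H1_addr := (H1_addr form_alt).
Local Notation H1N := (H1N form_alt).
Local Notation alt0l := (alt0l form_alt).
Local Notation H1_mulSn := (H1_mulSn form_alt).
Implicit Types (t u v w : Tens H) (a b n s x y : H).

(* [t] lies in B_2(Q[H^(1)])_(z) modulo the relations of the exterior algebra. *)
Definition is_boundary t :=
  exists d, inC 3 S z d /\ tideal S (ext_rel S) (t - bd form d).

Definition eqbd u v := is_boundary (u - v).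
Local Notation "u ≡ v" := (eqbd u v) (at level 70, no associativity).

Lemma bdE u : bd form u = linext (bdw form) u.
Proof. by []. Qed.

Lemma is_boundary_ideal t : tideal S (ext_rel S) t -> is_boundary t.
Proof. by exists 0; rewrite bdE linear0 subr0; split => //; apply: all_words0. Qed.

Lemma is_boundary0 : is_boundary 0.
Proof. exact/is_boundary_ideal/tideal0. Qed.

Lemma is_boundary_bd d : inC 3 S z d -> is_boundary (bd form d).
Proof. by exists d; rewrite subrr; split => //; apply: tideal0. Qed.

Lemma is_boundaryD t1 t2 : is_boundary t1 -> is_boundary t2 -> is_boundary (t1 + t2).
Proof.
move=> [d1 [C1 I1]] [d2 [C2 I2]]; exists (d1 + d2); split; first exact: all_wordsD.
by rewrite bdE linearD /= -!bdE opprD addrACA; apply: tidealD.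
Qed.

Lemma is_boundaryZ (q : rat) t : is_boundary t -> is_boundary (q *: t).
Proof.
move=> [d [Cd Id]]; exists (q *: d); split; first exact: all_wordsZ.
by rewrite bdE linearZ /= -bdE -scalerBr; apply: tidealZ.
Qed.

Lemma is_boundaryN t : is_boundary t -> is_boundary (- t).
Proof. by rewrite -scaleN1r; apply: is_boundaryZ. Qed.

Lemma is_boundary_linext f u : {in msupp u, forall k, is_boundary (f k)} ->
  is_boundary (linext f u).
Proof.
by apply: linext_ind; [apply: is_boundary0 | apply: is_boundaryD | apply: is_boundaryZ].
Qed.

Lemma eqbd0 t : t ≡ 0 <-> is_boundary t.
Proof. by rewrite /eqbd subr0. Qed.

Lemma eqbd_subr0 u v : u - v ≡ 0 -> u ≡ v.
Proof. by rewrite eqbd0. Qed.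

Lemma eqbd_refl u : u ≡ u.
Proof. by rewrite /eqbd subrr; apply: is_boundary0. Qed.
Hint Resolve eqbd_refl : core.

Instance eqbd_equiv : Equivalence eqbd.
Proof.
split=> [u|u v|u v w] //; rewrite /eqbd.
- by move/is_boundaryN; rewrite opprB.
- by move=> uv vw; have := is_boundaryD uv vw; rewrite addrA subrK.
Qed.

Instance addr_eqbd : Proper (eqbd ==> eqbd ==> eqbd) (@GRing.add (Tens H)).
Proof.
move=> u u' uu' v v' vv'; have := is_boundaryD uu' vv'.
by rewrite /eqbd opprD addrACA.
Qed.

Instance oppr_eqbd : Proper (eqbd ==> eqbd) (@GRing.opp (Tens H)).
Proof. by move=> u u' /is_boundaryN; rewrite /eqbd opprB addrC opprK. Qed.

Definition zpair a : Tens H := << [:: a; z - a] >>.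

Lemma H1_subl a : S a -> S (z - a).
Proof. by move=> /H1N; apply: H1_addl => Sz; apply: Sz. Qed.

Lemma zpair_sub a : S a -> zpair (z - a) ≡ - zpair a.
Proof.
move=> Sa; rewrite /eqbd opprK /zpair subKr addrC.
exact/is_boundary_ideal/tideal_sym/H1_subl.
Qed.

Lemma zpairD_form a b : S a -> S b -> form a b != 0 -> zpair (a + b) ≡ zpair a + zpair b.
Proof.
move=> Sa Sb ab0; pose c := z - (a + b).
have Sc : S c by apply/H1_subl/(H1_forml (y := a)); rewrite altDr altxx add0r.
have ac : form a c = - form a b by rewrite altDr alt_kermur add0r altNr altDr altxx add0r.
have bc : form b c = form a b.
  by rewrite altDr alt_kermur add0r altNr altDr altxx addr0 (altC b a) opprK.
have zc : a + b + c = z by rewrite addrC subrK.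
have Cabc : inC 3 S z << [:: a; b; c] >>.
  apply: all_wordsU; split => //; last by rewrite !big_cons big_nil addr0 addrA.
  by move=> x; rewrite !inE => /or3P[] /eqP->.
(* bd ([a] /\ [b] /\ [c]) = - <a,b> (zpair (a + b) + zpair (z - b) + zpair (z - a)) *)
have := is_boundaryZ (- (form a b)%:~R)^-1 (is_boundary_bd Cabc).
rewrite bdE linextU bdw3 ac bc mulrNz -scaleNr -!scalerDr scalerA.
rewrite mulVf ?oppr_eq0 ?intr_eq0 // scale1r -eqbd0.
have -> : << [:: a + c; b] >> = zpair (z - b).
  by rewrite /zpair subKr /c opprD addrCA addNKr.
have -> : << [:: b + c; a] >> = zpair (z - a).
  by rewrite /zpair subKr /c opprD addrCA (addrC (- a)) addNKr.
rewrite !zpair_sub // => sum0; apply: eqbd_subr0.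
by rewrite opprD addrA (addrAC _ (- zpair a)).
Qed.

Lemma eqbd_addr2 u v w : u + w ≡ v + w -> u ≡ v.
Proof. by rewrite /eqbd opprD addrACA subrr addr0. Qed.

Lemma eqbd_sub_swap u v u' v' : u + v' ≡ u' + v -> u - v ≡ u' - v'.
Proof. by move=> e; apply: (@eqbd_addr2 _ _ (v + v')); rewrite subrKA (addrC v) subrKA. Qed.

Lemma H1_add2 s : S s -> S (s + s).
Proof. by rewrite -mulr2n; apply: H1_mulSn. Qed.

Lemma H1_add3 s : S s -> S (s + (s + s)).
Proof. by rewrite -mulr2n -mulrS; apply: H1_mulSn. Qed.

(* When [form a b = 0] we pass through an auxiliary [w] pairing nontrivially
   with [a], [b] and [a + b]. *)
Lemma zpairD a b : S a -> S b -> S (a + b) -> zpair (a + b) ≡ zpair a + zpair b.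
Proof.
move=> Sa Sb Sab; have [ab0|ab] := eqVneq (form a b) 0; last exact: zpairD_form.
have [w [aw bw abw]] := H1_witness3 form_alt Sa Sb Sab.
have Sw : S w := H1_forml aw.
have Sbw : S (b + w).
  by apply: (H1_forml (y := a)); rewrite altDr ab0 add0r.
have abw' : form a (b + w) != 0 by rewrite altDr ab0 add0r.
apply: (@eqbd_addr2 _ _ (zpair w)).
rewrite -(zpairD_form Sab Sw abw) -addrA (zpairD_form Sa Sbw abw').
by rewrite (zpairD_form Sb Sw bw) addrA.
Qed.

Section ExtensionToKerMu.
Variables (s0 : H) (S_s0 : S s0).

Lemma zpair_shift n s s' : ~ S n -> S s -> S s' -> S (s + s') ->
  zpair (n + s) - zpair s ≡ zpair (n + s') - zpair s'.
Proof.
move=> Kn Ss Ss' Sss'; apply: eqbd_sub_swap.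
have Sn r : S r -> S (n + r) by apply: H1_addl.
have Snss' : S (n + s + s') by rewrite -addrA; apply: Sn.
have Sns's : S (n + s' + s) by rewrite addrAC.
by rewrite -(zpairD (Sn _ Ss) Ss' Snss') -(zpairD (Sn _ Ss') Ss Sns's) addrAC.
Qed.

(* On ker mu the extension of [zpair] is forced to be n |-> zpair (n + s) - zpair s,
   independently of s in H^(1) by [zpair_shift_ker]. *)
Definition zpair_ker n := zpair (n + s0) - zpair s0.

Lemma zpair_shift_ker n s : ~ S n -> S s -> zpair (n + s) - zpair s ≡ zpair_ker n.
Proof.
move=> Kn Ss; case: (classic (S (s + s0))) => Sss0; first exact: zpair_shift.
(* otherwise compare through 2 s: both s + 2 s and 2 s + s0 lie in H^(1) *)
rewrite (zpair_shift Kn Ss (H1_add2 Ss) (H1_add3 Ss)).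
by apply: zpair_shift => //; [apply: H1_add2 | rewrite addrAC; apply: H1_addl].
Qed.

Definition zhom x : Tens H :=
  if excluded_middle_informative (S x) then zpair x else zpair_ker x.

Lemma zhom_H1 x : S x -> zhom x = zpair x.
Proof. by rewrite /zhom; case: excluded_middle_informative. Qed.

Lemma zhom_ker x : ~ S x -> zhom x = zpair_ker x.
Proof. by rewrite /zhom; case: excluded_middle_informative. Qed.

Lemma zhomD x y : zhom (x + y) ≡ zhom x + zhom y.
Proof.
have [Sx|Kx] := classic (S x); have [Sy|Ky] := classic (S y).
- have [Sxv|Kxv] := classic (S (x + y)); first by rewrite !zhom_H1 //; apply: zpairD.
  have Syy := H1_add2 Sy.
  have Sxyy : S (x + (y + y)) by rewrite addrA; apply: H1_addl.
  rewrite zhom_ker // !zhom_H1 // -(zpair_shift_ker Kxv Sy) -addrA.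
  by rewrite (zpairD Sx Syy Sxyy) (zpairD Sy Sy Syy) addrA addrK.
- rewrite (zhom_H1 (H1_addr Ky Sx)) (zhom_H1 Sx) (zhom_ker Ky) -(zpair_shift_ker Ky Sx).
  by rewrite addrCA subrr addr0 addrC.
- rewrite (zhom_H1 (H1_addl Kx Sy)) (zhom_ker Kx) (zhom_H1 Sy) -(zpair_shift_ker Kx Sy).
  by rewrite subrK.
- have Kxy : ~ S (x + y).
    by apply; move=> w; rewrite altDl (notH1_kermu Kx) (notH1_kermu Ky) addr0.
  rewrite !zhom_ker // -(zpair_shift_ker Kx (H1_addl Ky S_s0)) /zpair_ker.
  by rewrite addrA subrK addrA.
Qed.

Lemma zhom_sub x : zhom x + zhom (z - x) ≡ 0.
Proof.
have Kz : ~ S z by apply.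
have S_s0' := H1N S_s0.
have zpair_opp : zpair s0 + zpair (- s0) ≡ 0.
  have K0 : ~ S 0 by apply=> y; rewrite alt0l.
  have := zhomD s0 (- s0); rewrite subrr (zhom_ker K0) /zpair_ker add0r subrr.
  by rewrite !zhom_H1 // => e; symmetry.
rewrite -zhomD addrC subrK (zhom_ker Kz) /zpair_ker -{1}(opprK s0) zpair_sub //.
by rewrite -opprD addrC zpair_opp oppr0.
Qed.

Definition zproj (k : seq H) : Tens H :=
  if k is [:: x; y] then (if x + y == z then zhom x else 0) else 0.

Lemma zproj_long k : (2 < size k)%N -> zproj k = 0.
Proof. by case: k => [|x [|y [|]]]. Qed.

Lemma is_boundary_zproj_swap x y : is_boundary (zproj [:: x; y] + zproj [:: y; x]).
Proof.
rewrite /= (addrC y x); case: eqP => [xy_z|_]; last by rewrite addr0; apply: is_boundary0.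
by have := zhom_sub x; rewrite eqbd0 -xy_z (addrC x y) addrK.
Qed.

Lemma is_boundary_zproj_hat_ideal g : hat_ideal H g -> is_boundary (linext zproj g).
Proof.
have B0 := is_boundary0.
elim=> {g} [g [[v [Qv ->]]|[x [y [w ->]]]]||u v _ Bu _ Bv|q u _ Bu|a u _ Iu Bu|a u _ Iu Bu].
- (* symmetrising [sum_(k,l) v_k v_l zproj (k ++ l)] pairs [zproj [x; y]] with [zproj [y; x]] *)
  rewrite linext_tmul; set E := linext _ v.
  have -> : E = 2^-1 *: (E + E) by rewrite -mulr2n -scaler_nat scalerA mulVf ?scale1r.
  apply: is_boundaryZ; rewrite {2}/E linext_swap -linextDf.
  apply: is_boundary_linext => k /Qv[k1 _]; rewrite -linextDf.
  apply: is_boundary_linext => l /Qv[l1 _].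
  case: k l k1 l1 => [|x [|]] // [|y [|]] // _ _; exact: is_boundary_zproj_swap.
- rewrite !linearB /= !linextU /= (addrC w y) addrA (addrC w x) addrA (addrC y x).
  case: eqP => _; last by rewrite !subr0.
  by have := zhomD x y; rewrite /eqbd opprD addrA.
- by rewrite linear0.
- by rewrite linearD; apply: is_boundaryD.
- by rewrite linearZ; apply: is_boundaryZ.
- rewrite linext_tmul; apply: is_boundary_linext => -[|x k] _.
    by rewrite (eq_linext (g := zproj)).
  rewrite (eq_linext (g := fun=> 0)) ?linext0f // => l /(hat_ideal_size_gt1 Iu) l2.
  by rewrite zproj_long //= size_cat ltnS (leq_trans l2) ?leq_addl.
- rewrite linext_tmul linext_swap; apply: is_boundary_linext => -[|x k] _.
    by rewrite (eq_linext (g := zproj)) // => l _; rewrite cats0.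
  rewrite (eq_linext (g := fun=> 0)) ?linext0f // => l /(hat_ideal_size_gt1 Iu) l2.
  by rewrite zproj_long //= size_cat /= addnS ltnS (leq_trans l2) ?leq_addr.
Qed.

Lemma linext_zproj_C2 c : inC 2 S z c -> linext zproj c = c.
Proof.
move=> Cc; rewrite -[RHS]linext_id; apply: eq_linext => k /Cc[].
case: k => [|x [|y [|]]] //= _ Sxy; rewrite !big_cons big_nil addr0 => xy_z.
have Sx : S x by apply: Sxy; rewrite inE eqxx.
by rewrite xy_z eqxx (zhom_H1 Sx) /zpair -xy_z (addrC x y) addrK.
Qed.

End ExtensionToKerMu.

End BoundariesModuloExterior.

Theorem proposition3p3 (H : zmodType) (form : H -> H -> int) (z : H) :
  alt_bilinear form -> in_kermu form z ->
  forall c : Tens H, inC 2 (H1 form) z c ->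
    ( (tideal (H1 form) (ext_rel (H1 form)) (bd form c)
       /\ tideal (@allH H) (fun g => ext_rel (@allH H) g \/ ihat_gen g) c)
    <-> exists d : Tens H, inC 3 (H1 form) z d /\
          tideal (H1 form) (ext_rel (H1 form)) (c - bd form d)).
Proof.
move=> form_alt z_kermu c Cc; split.
- move=> [_ Ihat_c]; have [[s0 S_s0]|noH1] := classic (exists s, H1 form s).
    rewrite -(linext_zproj_C2 s0 Cc).
    exact: is_boundary_zproj_hat_ideal.
  have -> : c = 0.
    apply: all_words_none Cc => -[|x k] [] // _ Sxk _.
    by apply: noH1; exists x; apply: Sxk; rewrite inE eqxx.
  exact: is_boundary0.
- move=> [d [Cd Id]]; split; first by rewrite (bd_C2_kermu form_alt z_kermu Cc); apply: tideal0.
  rewrite -(subrK (bd form d) c); apply: tidealD; last exact: hat_ideal_bd_C3 Cd.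
  by apply: tideal_sub Id => // g [v [Qv ->]]; left; exists v; split=> // k /Qv[].
Qed.
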